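(* Let $(\Theta,p,A,u,v)$ be any persuasion environment and suppose the receiver's updating rule is the geometric distortion $\mu^G_\alpha$ with $\alpha>0$. Then $\mathcal{V}^1(p,\mu^G_\alpha)=\mathcal{V}^2(p,\mu^G_\alpha)$.
   Context: A persuasion environment $(\Theta,p,A,u,v)$: finite state set $\Theta$, full-support prior $p\in\Delta(\Theta)$, finite action set $A$, receiver utility $u(a,\theta)$, sender utility $v(a)$ depending only on the action. $\hat a(q)$ is a sender-optimal selection from $\arg\max_{a}\mathbb{E}_q[u(a,\tilde\theta)]$ and $\hat v(q):=v(\hat a(q))$. The Bayesian sender chooses experiments $\sigma=(\sigma_\theta)_\theta$, $\sigma_\theta\in\Delta(S)$, $S$ a fixed sufficiently large finite signal set. Bayesian updating: $\mu_B(\sigma,p)(\theta\mid s)=\sigma_\theta(s)p(\theta)/\sum_{\theta'}\sigma_{\theta'}(s)p(\theta')$. Geometric distortion: $\mu^G_\alpha(\sigma,p)(\theta\mid s)=\frac{p(\theta)\sigma_\theta(s)^\alpha}{\sum_{\theta'}p(\theta')\sigma_{\theta'}(s)^\alpha}$; it satisfies $\mu^G_\alpha(\sigma,p)(\cdot\mid s)=D_p(\mu_B(\sigma,p)(\cdot\mid s))$ with $D_p(q)(\theta)=\frac{p(\theta)^{1-\alpha}q(\theta)^\alpha}{\sum_{\theta'}p(\theta')^{1-\alpha}q(\theta')^\alpha}$. One-shot: $\mathcal{R}(p)$ is the set of distributions $\rho$ over $\Delta(\Theta)$ with $\mathbb{E}_\rho[\tilde q]=p$; $\check v(q):=\hat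 v(D_p(q))$; $\mathcal{V}^1(p,\mu):=\{\mathbb{E}_\rho[\check v(\tilde q)]:\rho\in\mathcal{R}(p)\}$. Two-step: after a first experiment the sender's belief is the Bayesian posterior $q$ and the receiver's is $D_p(q)$; after a second experiment the sender's Bayesian posterior (from $q$) is $r$ and the receiver's belief is $D^{II}_q(r):=D_{D_p(q)}\!\left(\frac{r\cdot(D_p(q)/q)}{\sum_{\theta'}r(\theta')D_p(q)(\theta')/q(\theta')}\right)$ (componentwise). Let $\check v^q(r):=\hat v(D^{II}_q(r))$ and $\mathcal{V}^2(p,\mu):=\{\mathbb{E}_{\rho_1}[\mathbb{E}_{\rho_2(\tilde q)}[\check v^{\tilde q}(\tilde r)]]:\rho_1\in\mathcal{R}(p),\ \rho_2(q)\in\mathcal{R}(q)\ \forall q\in\operatorname{supp}\rho_1\}$. *)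

From HB Require Import structures.
From mathcomp Require Import all_boot all_order all_algebra.
From mathcomp Require Import classical_sets reals exp.
Set Implicit Arguments. Unset Strict Implicit. Unset Printing Implicit Defensive.
Import Order.TTheory GRing.Theory Num.Theory.
Local Open Scope ring_scope.
Local Open Scope classical_set_scope.

Section Persuasion.
Variables (R : realType) (Theta A : finType).

Definition belief := {ffun Theta -> R}.
Definition is_belief (q : belief) : Prop :=
  (forall t, 0 <= q t) /\ \sum_t q t = 1.

Definition EU (u : A -> Theta -> R) (q : belief) (a : A) : R :=
  \sum_t q t * u a t.
Definition receiver_opt (u : A -> Theta -> R) (q : belief) (a : A) : Prop :=
  forall b, EU u q b <= EU u q a.
Definition sender_opt_selection (u : A -> Theta -> R) (v : A -> R)
    (ahat : belief -> A) : Prop :=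
  forall q, is_belief q ->
    receiver_opt u q (ahat q) /\
    (forall b, receiver_opt u q b -> v b <= v (ahat q)).

Definition Dmap (alpha : R) (p q : belief) : belief :=
  [ffun t => (p t `^ (1 - alpha) * q t `^ alpha) /
             \sum_t' (p t' `^ (1 - alpha) * q t' `^ alpha)].

Definition DII (alpha : R) (p q r : belief) : belief :=
  let dq := Dmap alpha p q in
  let w : belief := [ffun t => r t * (dq t / q t)] in
  Dmap alpha dq [ffun t => w t / \sum_t' w t'].

(* finite-support distributions over Delta(Theta), as lists of
   (positive weight, belief); the support is the listed beliefs *)
Definition splitting (q : belief) (rho : seq (R * belief)) : Prop :=
  (forall x, x \in rho -> 0 < x.1 /\ is_belief x.2) /\
  \sum_(x <- rho) x.1 = 1 /\
  (forall t, \sum_(x <- rho) x.1 * x.2 t = q t).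

Definition expect (rho : seq (R * belief)) (f : belief -> R) : R :=
  \sum_(x <- rho) x.1 * f x.2.

Definition V1 (u : A -> Theta -> R) (v : A -> R) (ahat : belief -> A)
    (alpha : R) (p : belief) : set R :=
  [set y | exists rho, splitting p rho /\
                       y = expect rho (fun q => v (ahat (Dmap alpha p q)))].

Definition V2 (u : A -> Theta -> R) (v : A -> R) (ahat : belief -> A)
    (alpha : R) (p : belief) : set R :=
  [set y | exists rho1 (rho2 : belief -> seq (R * belief)),
     splitting p rho1 /\
     (forall x, x \in rho1 -> splitting x.2 (rho2 x.2)) /\
     y = expect rho1 (fun q =>
           expect (rho2 q) (fun r => v (ahat (DII alpha p q r))))].

End Persuasion.

(** The geometric distortion is dynamically consistent: if the second
    experiment only moves the sender's belief [q] to beliefs [r] supported in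
    the support of [q], the receiver's two-step belief [D^II_q(r)] equals the
    one-shot belief [D_p(r)], because the factors [q t ^ alpha] introduced by
    the first distortion cancel against those removed by the second.
    Consequently a two-step splitting can be compounded into a one-shot one
    with the same receiver beliefs, and a one-shot splitting is a two-step one
    with an uninformative second experiment.  This holds for any selection
    [ahat]. *)

From mathcomp Require Import all_boot all_order all_algebra.
From mathcomp Require Import classical_sets reals sequences exp.
From mathcomp Require Import ring.
Set Implicit Arguments. Unset Strict Implicit. Unset Printing Implicit Defensive.
Import Order.TTheory GRing.Theory Num.Theory.
Local Open Scope ring_scope.

Section GeometricDistortion.
Variables (R : realType) (Theta : finType).
Implicit Types (p q r : belief R Theta) (g h : Theta -> R).

Definition normalize g : belief R Theta := [ffun t => g t / \sum_t' g t'].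

Lemma DmapE (alpha : R) p q :
  Dmap alpha p q = normalize (fun t => p t `^ (1 - alpha) * q t `^ alpha).
Proof. by []. Qed.

Lemma normalize_scale (c : R) g h :
  c != 0 -> (forall t, h t = c * g t) -> normalize h = normalize g.
Proof.
move=> c_neq0 hE; apply/ffunP => t; rewrite !ffunE hE.
rewrite (eq_bigr _ (fun t' _ => hE t')) -mulr_sumr invfM mulrACA.
by rewrite mulfV // mul1r.
Qed.

Lemma psumr_gt0 g t0 : (forall t, 0 <= g t) -> 0 < g t0 -> 0 < \sum_t g t.
Proof.
by move=> g_ge0 g_t0; rewrite (bigD1 t0) //= ltr_pwDl //; apply: sumr_ge0.
Qed.

Lemma gt0_powRE (x b : R) : 0 < x -> x `^ b = expR (b * ln x).
Proof. by move=> x_gt0; rewrite /powR gt_eqF. Qed.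

Lemma belief_exists_gt0 r : is_belief r -> exists t, 0 < r t.
Proof.
case=> r_ge0 r_sum1.
have r_neq0 : \sum_t r t <> 0 by rewrite r_sum1 => /eqP; rewrite oner_eq0.
by have [t /= r_t] := psumr_neq0P (fun t _ => r_ge0 t) r_neq0; exists t.
Qed.

Lemma DII_Dmap (alpha : R) p q r :
  (forall t, 0 < p t) -> alpha != 0 -> (forall t, 0 <= q t) -> is_belief r ->
  (forall t, q t = 0 -> r t = 0) ->
  DII alpha p q r = Dmap alpha p r.
Proof.
move=> p_gt0 alpha_neq0 q_ge0 r_bel r_sub_q.
have [t0 r_t0] := belief_exists_gt0 r_bel; have [r_ge0 _] := r_bel.
have q_gt0 t : 0 < r t -> 0 < q t.
  move=> r_gt0; rewrite lt_def q_ge0 andbT; apply/eqP => /r_sub_q r0.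
  by move: r_gt0; rewrite r0 ltxx.
have weight_ge0 t : 0 <= p t `^ (1 - alpha) * q t `^ alpha.
  by rewrite mulr_ge0 ?powR_ge0.
set S := \sum_t p t `^ (1 - alpha) * q t `^ alpha.
have S_gt0 : 0 < S.
  by apply: (psumr_gt0 (t0 := t0) weight_ge0); rewrite mulr_gt0 ?powR_gt0 ?q_gt0.
rewrite /DII; set dq := Dmap alpha p q.
have dqE t : dq t = p t `^ (1 - alpha) * q t `^ alpha / S by rewrite ffunE.
have dq_gt0 t : 0 < r t -> 0 < dq t.
  by move=> r_gt0; rewrite dqE divr_gt0 // mulr_gt0 ?powR_gt0 ?q_gt0.
clearbody dq.
set w : belief R Theta := [ffun t => r t * (dq t / q t)].
have w_ge0 t : 0 <= w t.
  by rewrite ffunE mulr_ge0 // divr_ge0 // dqE divr_ge0 ?(ltW S_gt0).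
have w_gt0 t : 0 < r t -> 0 < w t.
  by move=> r_gt0; rewrite ffunE mulr_gt0 // divr_gt0 ?dq_gt0 ?q_gt0.
set W := \sum_t w t.
have W_gt0 : 0 < W by exact: psumr_gt0 w_ge0 (w_gt0 _ r_t0).
(* [dq ^ (1 - alpha) * (r dq / q) ^ alpha = dq (r / q) ^ alpha
    = p ^ (1 - alpha) r ^ alpha / S]: the weights are proportional. *)
rewrite !DmapE; apply: (normalize_scale (c := expR (- ln S - alpha * ln W))).
  by rewrite gt_eqF ?expR_gt0.
move=> t; rewrite [[ffun _ => _ / W] t]ffunE.
have [r_gt0|] := ltrP 0 (r t); last first.
  move=> r_le0; have r0 : r t = 0 by apply/le_anti; rewrite r_le0 r_ge0.
  by rewrite [w t]ffunE r0 !mul0r !powR0 // !mulr0.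
have q_t := q_gt0 _ r_gt0; have dq_t := dq_gt0 _ r_gt0.
have w_t := w_gt0 _ r_gt0.
rewrite !gt0_powRE ?divr_gt0 // ln_div ?posrE // ffunE lnM ?posrE ?divr_gt0 //.
rewrite ln_div ?posrE // dqE ln_div ?posrE ?mulr_gt0 ?powR_gt0 //.
rewrite lnM ?posrE ?powR_gt0 // !gt0_powRE // !expRK -!expRD; congr expR; ring.
Qed.

End GeometricDistortion.

Section Splittings.
Variables (R : realType) (Theta : finType).
Notation lottery := (seq (R * belief R Theta)).

Lemma splitting_self (q : belief R Theta) :
  is_belief q -> splitting q [:: (1, q)].
Proof.
move=> q_bel; split.
  by move=> x; rewrite inE => /eqP ->; split; rewrite ?ltr01.
by rewrite big_seq1; split => // t; rewrite big_seq1 mul1r.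
Qed.

Lemma splitting_support (q : belief R Theta) (rho : lottery) x t :
  splitting q rho -> x \in rho -> q t = 0 -> x.2 t = 0.
Proof.
move=> [rho_bel [_ rho_mean]] x_rho qt0.
have term_ge0 y : y \in rho -> 0 <= y.1 * y.2 t.
  by case/rho_bel => y1_gt0 [y2_ge0 _]; exact: mulr_ge0 (ltW y1_gt0) (y2_ge0 t).
have /eqP := rho_mean t; rewrite qt0.
rewrite big_seq psumr_eq0 //.
move=> /allP/(_ x x_rho); rewrite x_rho /= mulf_eq0 => /orP[/eqP x1_0|/eqP //].
by have [] := rho_bel x x_rho; rewrite x1_0 ltxx.
Qed.

Definition compound (rho1 : lottery) (rho2 : belief R Theta -> lottery) :
    lottery :=
  [seq (x.1 * z.1, z.2) | x <- rho1, z <- rho2 x.2].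

Lemma expect_compound rho1 rho2 (f : belief R Theta -> R) :
  expect (compound rho1 rho2) f = expect rho1 (fun q => expect (rho2 q) f).
Proof.
rewrite /expect big_allpairs_dep; apply: eq_bigr => x _.
by rewrite mulr_sumr; apply: eq_bigr => z _; rewrite mulrA.
Qed.

Lemma splitting_compound (p : belief R Theta) rho1 rho2 :
  splitting p rho1 -> (forall x, x \in rho1 -> splitting x.2 (rho2 x.2)) ->
  splitting p (compound rho1 rho2).
Proof.
move=> [rho1_bel [rho1_sum1 rho1_mean]] rho2_split; split; [|split].
- move=> _ /allpairsPdep[x [z [x_rho1 z_rho2 ->]]].
  have [x1_gt0 _] := rho1_bel x x_rho1.
  have [z1_gt0 z2_bel] := (rho2_split x x_rho1).1 z z_rho2.
  by split; rewrite ?mulr_gt0.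
- rewrite big_allpairs_dep -rho1_sum1; apply: eq_big_seq => x x_rho1.
  by rewrite -mulr_sumr (rho2_split x x_rho1).2.1 mulr1.
- move=> t; rewrite big_allpairs_dep -rho1_mean; apply: eq_big_seq => x x_rho1.
  rewrite -(rho2_split x x_rho1).2.2 mulr_sumr.
  by apply: eq_bigr => z _; rewrite mulrA.
Qed.

End Splittings.

Theorem corollary1 (R : realType) (Theta A : finType)
    (p : belief R Theta) (u : A -> Theta -> R) (v : A -> R)
    (ahat : belief R Theta -> A) (alpha : R) :
  (forall t, 0 < p t) -> \sum_t p t = 1 ->
  sender_opt_selection u v ahat ->
  0 < alpha ->
  V1 u v ahat alpha p = V2 u v ahat alpha p.
Proof.
move=> p_gt0 _ _ /lt0r_neq0 alpha_neq0.
apply/seteqP; split=> y.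
- case=> rho [rho_split ->]; exists rho, (fun q => [:: (1, q)]).
  have rho_bel x : x \in rho -> is_belief x.2 by case/(rho_split.1 x).
  split=> //; split=> [x /rho_bel|]; first exact: splitting_self.
  apply: eq_big_seq => x /rho_bel x_bel.
  by rewrite /expect big_seq1 mul1r DII_Dmap //; case: x_bel.
- case=> rho1 [rho2 [rho1_split [rho2_split ->]]].
  exists (compound rho1 rho2); split; first exact: splitting_compound.
  rewrite expect_compound; apply: eq_big_seq => x x_rho1.
  have [_ [x_ge0 _]] := rho1_split.1 x x_rho1.
  have x_split := rho2_split x x_rho1.
  congr (_ * _); apply: eq_big_seq => z z_rho2.
  have [_ z_bel] := x_split.1 z z_rho2.
  by rewrite DII_Dmap // => t; apply: splitting_support x_split z_rho2.
Qed.
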